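(* For every integer $m$ with $3\leq m\leq 6$ we have $d_m\geq \frac{1}{m+2}$, and for every integer $m\geq 7$ we have $d_m\geq\frac18$.
   Context: For a positive integer $m$, a subset $A$ of an abelian group is $m$-sum-free if there is no triple $(x,y,z)\in A^3$ with $x+y=mz$. For a prime $p$, $d_m(\mathbb{Z}/p\mathbb{Z})=\max\{|A|/p : A\subseteq \mathbb{Z}/p\mathbb{Z}\ \text{is } m\text{-sum-free}\}$. For $m\ge 3$ it is known (from prior work) that $d_m(\mathbb{Z}/p\mathbb{Z})$ converges as $p\to\infty$ through primes; $d_m$ denotes this limit. *)

From HB Require Import structures.
From mathcomp Require Import all_boot all_order all_algebra.
From Stdlib Require Import Reals.

Set Implicit Arguments. Unset Strict Implicit. Unset Printing Implicit Defensive.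

Definition msumfree (G : finZmodType) (m : nat) (A : {set G}) : bool :=
  [forall x in A, forall y in A, forall z in A, GRing.add x y != GRing.natmul z m].

Definition dmp (m p : nat) : R :=
  Rdiv (INR (\max_(A : {set 'Z_p} | msumfree m A) #|A|)) (INR p).

Definition dm_limit (m : nat) (L : R) : Prop :=
  forall eps : R, Rlt 0 eps ->
    exists N : nat, forall p : nat, prime p -> (N <= p)%N ->
      Rlt (Rabs (Rminus (dmp m p) L)) eps.

From mathcomp Require Import all_boot all_order all_algebra zify.
From Stdlib Require Import Reals Lra.

Set Implicit Arguments.
Unset Strict Implicit.
Unset Printing Implicit Defensive.

(* Both bounds come from Bohr-type sets.  If every residue z of A satisfies
   z/p in I = [a, a + l) and m z/p in [2a + 2l, 2a + 1) modulo 1, then for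
   x, y, z in A the difference m z - (x + y) lies strictly between two
   consecutive multiples of p, so A is m-sum-free.  For m = n + 2 and
   I = [2, m) / (m^2 - 4) the second condition follows from the first, and A has
   density 1/(m + 2).  For I = [1/(2n), 1/(2n) + 1/4) the second condition
   selects blocks of length 1/(2m) and period 1/m starting at the left end of I;
   they cover at least half of I, so A has density at least 1/8.  Counting the
   residues in these intervals loses O(1) elements, so both densities survive
   the limit p -> oo. *)

Definition sumfree_mod (m p : nat) (P : pred nat) : Prop :=
  forall x y z, P x -> P y -> P z -> (x + y) %% p != (z * m) %% p.

Lemma msumfree_ord q m (P : pred nat) :
  sumfree_mod m q.+2 P -> msumfree m [set x : 'I_q.+2 | P x].
Proof.
move=> sumfree; apply/forallP => x; apply/implyP; rewrite inE => Px.
apply/forallP => y; apply/implyP; rewrite inE => Py.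
apply/forallP => z; apply/implyP; rewrite inE => Pz.
apply: contra (sumfree x y z Px Py Pz) => /eqP/(congr1 val).
by rewrite Zp_mulrn /= => ->.
Qed.

Lemma card_ord_pred q (P : pred nat) :
  #|[set x : 'I_q | P x]| = \sum_(0 <= i < q) P i.
Proof.
rewrite -sum1dep_card big_mkord big_mkcond /=.
by apply: eq_bigr => i _; case: (P i).
Qed.

Lemma dmp_ge_sum m p (P : pred nat) : prime p -> sumfree_mod m p P ->
  (INR (\sum_(0 <= i < p) P i) / INR p <= dmp m p)%R.
Proof.
move=> p_prime sumfree; have p_gt1 := prime_gt1 p_prime.
rewrite /dmp; apply: Rmult_le_compat_r.
  by apply/Rlt_le/Rinv_0_lt_compat/lt_0_INR/ltP; lia.
apply/le_INR/leP.
have -> : \sum_(0 <= i < p) P i = #|[set x : 'Z_p | P x]|.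
  by rewrite card_ord_pred Zp_cast.
apply: (leq_bigmax_cond (F := fun A : {set 'Z_p} => #|A|)).
by apply: msumfree_ord; rewrite Zp_cast.
Qed.

Lemma dm_limit_ge m (c K L : R) :
  (forall p, prime p -> (c - K / INR p <= dmp m p)%R) -> dm_limit m L -> (c <= L)%R.
Proof.
move=> lower conv; apply: Rnot_lt_le => ltLc.
pose eps := ((c - L) / 2)%R.
have eps_gt0 : (0 < eps)%R by rewrite /eps; lra.
have [N closeN] := conv eps eps_gt0.
have [M ltKM] := INR_unbounded (K / eps).
have [p ltMNp p_prime] := prime_above (maxn N M).
have ltMp : (INR M < INR p)%R by apply/lt_INR/ltP; lia.
have p_gt0 : (0 < INR p)%R by have := pos_INR M; lra.
have small : (K / INR p < eps)%R.
  have ltK : (K < eps * INR p)%R.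
    have := Rmult_lt_compat_l eps _ _ eps_gt0 (Rlt_trans _ _ _ ltKM ltMp).
    by replace (eps * (K / eps))%R with K by (field; lra).
  apply: (Rmult_lt_reg_r (INR p)) => //.
  by replace (K / INR p * INR p)%R with K by (field; lra); lra.
have leNp : N <= p by lia.
have [close _] := Rabs_def2 _ _ (closeN p p_prime leNp).
have := lower p p_prime; rewrite /eps in close small; lra.
Qed.

Lemma dm_limit_ge_inv m q K (P : nat -> pred nat) L : 0 < q ->
  (forall p, prime p -> sumfree_mod m p (P p)) ->
  (forall p, prime p -> p <= q * (\sum_(0 <= z < p) P p z + K)) ->
  dm_limit m L -> (/ INR q <= L)%R.
Proof.
move=> q_gt0 sumfree dense; apply: (@dm_limit_ge _ _ (INR K)) => p p_prime.
apply: Rle_trans (dmp_ge_sum p_prime (sumfree p p_prime)).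
have p_gt0 : (0 < INR p)%R by apply/lt_0_INR/ltP/prime_gt0.
have q_pos : (0 < INR q)%R by apply/lt_0_INR/ltP.
have := le_INR _ _ (leP (dense p p_prime)); rewrite mult_INR plus_INR.
set S := INR (\sum_(0 <= z < p) _) => le_pS.
have -> : (/ INR q - INR K / INR p = (INR p / INR q - INR K) / INR p)%R.
  by field; lra.
apply: Rmult_le_compat_r; first by apply/Rlt_le/Rinv_0_lt_compat.
apply: (Rmult_le_reg_l (INR q)) => //.
by replace (INR q * (INR p / INR q - INR K))%R with (INR p - INR q * INR K)%R
  by (field; lra); nra.
Qed.

Lemma sum_mul_between_ge c a b n :
  minn b (c * n) - a <= c * \sum_(0 <= i < n) (a <= c * i < b) + c.
Proof.
elim: n => [|n IHn]; first by rewrite muln0 minn0.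
rewrite big_nat_recr //= mulnDr mulnS.
case: (leqP a (c * n)); case: (ltnP (c * n) b) => /=; lia.
Qed.

Lemma sum_mul_in_intervals_ge c n N (lo hi : nat -> nat) :
  (forall j k, j < k -> hi j <= lo k) ->
  \sum_(0 <= k < N) (minn (hi k) (c * n) - lo k) <=
    c * \sum_(0 <= i < n) has (fun k => lo k <= c * i < hi k) (iota 0 N) + N * c.
Proof.
move=> sorted; elim: N => [|N IHN]; first by rewrite big_geq.
pose inI N i := has (fun k => lo k <= c * i < hi k) (iota 0 N).
have disjoint_union : \sum_(0 <= i < n) inI N.+1 i =
    \sum_(0 <= i < n) inI N i + \sum_(0 <= i < n) (lo N <= c * i < hi N).
  rewrite -big_split; apply: eq_bigr => i _.
  rewrite /inI -[N.+1]addn1 iotaD has_cat /= orbF add0n.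
  case: hasP => [[k] | _ //]; rewrite mem_iota => /andP[_ ltkN] /andP[_ hi_k].
  by have := sorted k N ltkN; case: leqP => //; lia.
rewrite big_nat_recr //= disjoint_union /inI.
have := sum_mul_between_ge c (lo N) (hi N) n; lia.
Qed.

Lemma modn_neq_between p u v k :
  u + k * p < v < u + k.+1 * p -> u %% p != v %% p.
Proof.
case/andP=> lo hi; apply/negP; rewrite eq_sym eqn_mod_dvd; last lia.
case/dvdnP=> j def_j.
have : k * p < j * p < k.+1 * p by rewrite -def_j; lia.
by rewrite !ltn_mul2r => /andP[/andP[_ kj] /andP[_ jk]]; lia.
Qed.

(* In the notation of the header, I = [s, s + w) / D, and only the first N
   translates by integers of [2s + 2w, 2s + D) / D are kept. *)
Definition bohr (m D s w N p : nat) : pred nat := fun z =>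
  (s * p <= D * z < (s + w) * p) &&
  has (fun k => (2 * s + 2 * w + D * k) * p <= D * m * z < (2 * s + D + D * k) * p)
      (iota 0 N).

Lemma bohr_sumfree m D s w N p : 0 < D -> sumfree_mod m p (bohr m D s w N p).
Proof.
move=> D_gt0 x y z /andP[Ix _] /andP[Iy _] /andP[_ /hasP[k _ mz_k]].
apply/(modn_neq_between (k := k)).
have : D * (x + y + k * p) < D * (z * m) < D * (x + y + k.+1 * p) by lia.
by rewrite !ltn_pmul2l.
Qed.

Lemma sum_bohr_ge m D s w N p : 0 < m ->
  \sum_(0 <= k < N) (minn (minn (m * (s + w) * p) ((2 * s + D + D * k) * p))
                          (D * m * p)
                     - maxn (m * s * p) ((2 * s + 2 * w + D * k) * p))
  <= D * m * \sum_(0 <= z < p) bohr m D s w N p z + N * (D * m).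
Proof.
move=> m_gt0.
pose lo k := maxn (m * s * p) ((2 * s + 2 * w + D * k) * p).
pose hi k := minn (m * (s + w) * p) ((2 * s + D + D * k) * p).
have -> : \sum_(0 <= z < p) bohr m D s w N p z =
          \sum_(0 <= z < p) has (fun k => lo k <= D * m * z < hi k) (iota 0 N).
  apply: eq_bigr => z _; congr (nat_of_bool _).
  have scale : (s * p <= D * z < (s + w) * p) =
               (m * (s * p) <= m * (D * z) < m * ((s + w) * p)).
    by rewrite leq_pmul2l // ltn_pmul2l.
  rewrite /bohr /= scale.
  have [Iz | Iz] := boolP (m * (s * p) <= m * (D * z) < m * ((s + w) * p)).
    by apply: eq_has => k; rewrite /lo /hi; apply/idP/idP; lia.
  by symmetry; apply/hasPn => k _; rewrite /lo /hi; apply/negP; lia.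
apply: sum_mul_in_intervals_ge => j k ltjk.
have Djk : D * j.+1 <= D * k by rewrite leq_mul2l ltjk orbT.
have : (2 * s + D + D * j) * p <= (2 * s + 2 * w + D * k) * p.
  by rewrite leq_mul2r; apply/orP; right; lia.
rewrite /lo /hi; lia.
Qed.

Lemma half_le_sum_blocks M N :
  M < 4 * N -> M <= 2 * \sum_(0 <= k < N) minn (M - 4 * k) 2.
Proof.
elim: N M => [|N IHN] M ltMN; first lia.
rewrite big_nat_recl //.
under eq_bigr do rewrite mulnS subnDA.
have [ltM4 | geM4] := ltnP M 4; first lia.
have := IHN (M - 4) ltac:(lia); lia.
Qed.

Lemma bohr_interval_dense n p : 0 < n ->
  p <= (n + 4) * (\sum_(0 <= z < p) bohr (n + 2) (n * (n + 4)) 2 n 1 p z + 1).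
Proof.
move=> n_gt0; have := @sum_bohr_ge (n + 2) (n * (n + 4)) 2 n 1 p ltac:(lia).
rewrite big_nat1 => count.
rewrite -(leq_pmul2l (_ : 0 < n * (n + 2))); last nia.
by apply: leq_trans (leq_trans _ count) _; [nia | lia].
Qed.

Lemma bohr_blocks_dense n p : 0 < n ->
  p <= 8 * (\sum_(0 <= z < p)
              bohr (n + 2) (4 * n * (n + 2)) (2 * (n + 2)) (n * (n + 2)) n.+1 p z + n.+1).
Proof.
move=> n_gt0.
have := @sum_bohr_ge (n + 2) (4 * n * (n + 2)) (2 * (n + 2)) (n * (n + 2)) n.+1 p
          ltac:(lia).
set T := \sum_(0 <= k < n.+1) _ => count.
set B := \sum_(0 <= k < n.+1) minn (n + 2 - 4 * k) 2.
(* On the scale of D m z, the k-th block meets I in a segment of length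
   n (n + 2) p min(n + 2 - 4k, 2). *)
have blocks : n * (n + 2) * p * B <= T.
  by rewrite /B big_distrr /=; apply: leq_sum => k _; nia.
have doubled : n * (n + 2) * p * (n + 2) <= n * (n + 2) * p * (2 * B).
  by rewrite leq_mul2l half_le_sum_blocks ?orbT //; lia.
rewrite -(leq_pmul2l (_ : 0 < n * (n + 2) * (n + 2))); [lia | nia].
Qed.

Theorem theorem1p7 :
  (forall (m : nat) (L : R), (3 <= m)%N -> (m <= 6)%N -> dm_limit m L ->
     Rle (Rinv (INR (m + 2))) L) /\
  (forall (m : nat) (L : R), (7 <= m)%N -> dm_limit m L ->
     Rle (Rinv 8) L).
Proof.
split=> [m L m_ge3 _ | m L m_ge7];
  have [n def_m] : exists n, m = n + 2 by exists (m - 2); lia.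
all: subst m.
- rewrite -addnA.
  apply: (dm_limit_ge_inv (K := 1) (P := fun p => bohr (n + 2) (n * (n + 4)) 2 n 1 p)).
  + by rewrite addn_gt0 orbT.
  + by move=> p _; apply: bohr_sumfree; nia.
  + by move=> p _; apply: bohr_interval_dense; lia.
- have -> : (8 = INR 8)%R by rewrite INR_IZR_INZ.
  apply: (dm_limit_ge_inv (K := n.+1)
           (P := fun p => bohr (n + 2) (4 * n * (n + 2)) (2 * (n + 2)) (n * (n + 2)) n.+1 p)).
  + by [].
  + by move=> p _; apply: bohr_sumfree; nia.
  + by move=> p _; apply: bohr_blocks_dense; lia.
Qed.
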